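(* Let $F$ be the $2$-dimensional cellular automaton with state set $Q_F=\{0,\leftarrow,\downarrow,\leftarrow\!\!\!\!\downarrow\}$, neighborhood $\{(0,0),(0,1),(1,0)\}$, and local rule $f(\text{center},\text{north},\text{east})$ given by $f(0,\downarrow,0)=\downarrow$, $f(0,0,\leftarrow)=\leftarrow$, $f(0,\ast,\leftarrow\!\!\!\!\downarrow)=\leftarrow$, $f(\downarrow,\ast,\leftarrow)=\leftarrow\!\!\!\!\downarrow$, and $f(a,\ast,\ast)=a$ in all other cases (where $\ast$ denotes any state, north is the cell at offset $(0,1)$ and east the cell at offset $(1,0)$). Then no $2$-dimensional freezing cellular automaton with neighborhood $\mathrm{VN}_2$ which is $1$-change can simulate $F$. Consequently, there is no $1$-change freezing cellular automaton with neighborhood $\mathrm{VN}_2$ which simulates every $2$-dimensional freezing cellular automaton with neighborhood $\mathrm{VN}_2$.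
   Context: A $d$-dimensional cellular automaton (CA) is $F=(d,Q,N,f)$ with $Q$ finite, $N\subset\mathbb{Z}^d$ finite, $f:Q^N\to Q$, global map $F(c)_z=f(c|_{z+N})$. A CA is freezing if there is a partial order $\preceq$ on $Q$ with $F(c)_z\preceq c_z$ for all $c,z$. A CA is $k$-change if in every orbit every cell changes state at most $k$ times. $\mathrm{VN}_2=\{(0,0),(\pm1,0),(0,\pm1)\}$. Simulation: $U$ simulates $G$ (same dimension $d$) if there exist $T>0$, a rectangular block $B\subseteq\mathbb{Z}^d$ with size-vector $b$, a finite $C\subset\mathbb{Z}^d$ with $\vec0\in C$, and $\phi:Q_G^C\to Q_U^B$ such that $\bar\phi(c)_{bz+r}=\phi(c|_{z+C})_r$ ($bz$ componentwise) defines an injective map $\bar\phi$ with $\bar\phi(G(c))=U^T(\bar\phi(c))$ for all $c$. *)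

From HB Require Import structures.
From mathcomp Require Import all_boot all_order all_algebra.
Set Implicit Arguments. Unset Strict Implicit. Unset Printing Implicit Defensive.
Import GRing.Theory Num.Theory.
Local Open Scope ring_scope.

Definition cell := (int * int)%type.
Definition cadd (z v : cell) : cell := (z.1 + v.1, z.2 + v.2).

(** A 2-dimensional cellular automaton F = (2, Q, N, f):
    state set [st] (finite), neighborhood [nb] (a finite list of vectors of Z^2,
    listed without repetition), and local rule f : Q^N -> Q, where Q^N is
    represented by finite functions indexed by positions in [nb]. *)
Record CA2 := MkCA2 {
  st : finType;
  nb : seq cell;
  nb_uniq : uniq nb;
  loc : {ffun 'I_(size nb) -> st} -> st }.

Definition config (A : CA2) := cell -> st A.

Definition glob (A : CA2) (c : config A) : config A :=
  fun z => @loc A [ffun i : 'I_(size (@nb A)) => c (cadd z (nth (0, 0) (@nb A) i))].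

Definition freezing (A : CA2) : Prop :=
  exists le : rel (st A),
    [/\ reflexive le, antisymmetric le, transitive le &
        forall (c : config A) (z : cell), le (glob c z) (c z)].

Definition k_change (k : nat) (A : CA2) : Prop :=
  forall (c : config A) (z : cell) (n : nat),
    (\sum_(t < n) (iter t.+1 (@glob A) c z != iter t (@glob A) c z) <= k)%N.

Definition VN2 : seq cell := [:: (0, 0); (1, 0); (-1, 0); (0, 1); (0, -1)].

Definition simulates (U G : CA2) : Prop :=
  exists (T b1 b2 : nat) (C : seq cell)
         (phi : {ffun 'I_(size C) -> st G} -> {ffun 'I_b1 * 'I_b2 -> st U})
         (barphi : config G -> config U),
    [/\ (0 < T)%N, (0 < b1)%N, (0 < b2)%N, uniq C & (0, 0) \in C] /\
    [/\ (forall (c : config G) (z : cell) (r1 : 'I_b1) (r2 : 'I_b2),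
           barphi c ((b1%:Z) * z.1 + (r1 : nat)%:Z, (b2%:Z) * z.2 + (r2 : nat)%:Z)
           = phi [ffun i : 'I_(size C) => c (cadd z (nth (0, 0) C i))] (r1, r2)),
        (forall c1 c2 : config G,
           (forall x, barphi c1 x = barphi c2 x) -> forall x, c1 x = c2 x) &
        (forall (c : config G) (x : cell),
           barphi (glob c) x = iter T (@glob U) (barphi c) x)].

Inductive QF := Q0 | QL | QD | QLD.

Definition QF_enc (q : QF) : 'I_4 :=
  match q with Q0 => inord 0 | QL => inord 1 | QD => inord 2 | QLD => inord 3 end.
Definition QF_dec (i : 'I_4) : QF :=
  match val i with 0 => Q0 | 1 => QL | 2 => QD | _ => QLD end.
Lemma QF_encK : cancel QF_enc QF_dec.
Proof. by case; rewrite /QF_dec /= inordK. Qed.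
HB.instance Definition _ := Finite.copy QF (can_type QF_encK).

Definition fF (c n e : QF) : QF :=
  match c, n, e with
  | Q0, QD, Q0 => QD
  | Q0, Q0, QL => QL
  | Q0, _, QLD => QL
  | QD, _, QL => QLD
  | a, _, _ => a
  end.

Definition NF : seq cell := [:: (0, 0); (0, 1); (1, 0)].
Lemma NF_uniq : uniq NF. Proof. by []. Qed.

Definition locF (v : {ffun 'I_(size NF) -> QF}) : QF :=
  fF (v (inord 0)) (v (inord 1)) (v (inord 2)).

Definition F_CA : CA2 := @MkCA2 QF NF NF_uniq locF.

(* Run F from two
   configurations differing only by a left-moving signal started far to the right
   of a down-moving signal on column 0.  The down signal turns the blank column
   into a column of QD, so U must change some cell near column 0 far below row 0;
   tracing the causes of that change backwards gives a connected wall of changed,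
   hence frozen, cells of U which stays in the strip of blocks seeing column 0 and
   climbs far above row 0 (its top sees the down signal because the image of the
   blank configuration is a fixed point of the freezing automaton U).  Later the
   two runs differ left of the strip, and that difference must come from the
   right along a connected path of cells of U staying within [lag] rows of row 0.
   A parity argument makes the two paths meet, at a cell that is frozen and agrees
   in both runs: a contradiction.  The second claim follows since F, read through
   VN_2, is itself a freezing automaton with neighbourhood VN_2. *)

From mathcomp Require Import all_boot all_order all_algebra.
From mathcomp Require Import zify.
From Stdlib Require Import Classical FunctionalExtensionality.
Import GRing.Theory Num.Theory.
Set Implicit Arguments. Unset Strict Implicit. Unset Printing Implicit Defensive.
Local Open Scope ring_scope.

Definition near (p q : cell) : bool := `|q.1 - p.1| + `|q.2 - p.2| <= 1.

Lemma path_edge_mem (h : cell) s (e : cell * cell) : path near h s -> e \in zip (h :: s) s ->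
  [/\ e.1 \in h :: s, e.2 \in h :: s & near e.1 e.2].
Proof.
elim: s h => [|y s IH] h //= /andP[nhy ps]; rewrite in_cons => /orP[/eqP -> | ein].
  by rewrite /= !in_cons !eqxx !orbT.
by have [? ? ?] := IH y ps ein; rewrite in_cons; split=> //; apply/orP; right.
Qed.

Lemma odd_count_switch (g : cell -> bool) x s :
  odd (count (fun e => g e.1 != g e.2) (zip (x :: s) s)) = (g x != g (last x s)).
Proof.
elim: s x => [|y s IH] x /=; first by case: (g x).
by rewrite oddD IH /=; case: (g x); case: (g y); case: (g (last y s)).
Qed.

Definition crosses (c : cell) (e : cell * cell) : bool :=
  (e.1.1 == e.2.1) && (c.1 < e.1.1) &&
  (((e.1.2 == c.2) && (e.2.2 == c.2 + 1)) || ((e.2.2 == c.2) && (e.1.2 == c.2 + 1))).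

Section Crossing.
Variables (xl xr lo hi : int) (w : cell) (ws : seq cell).
Hypotheses (wall_path : path near w ws) (wall_lo : w.2 < lo)
  (wall_hi : hi < (last w ws).2) (wall_cols : forall c : cell, c \in w :: ws -> xl <= c.1 <= xr).

Let crossings c := count (crosses c) (zip (w :: ws) ws).

Lemma crossings_right (c : cell) : xr < c.1 -> crossings c = 0%N.
Proof.
move=> xr_c; apply/eqP; rewrite -leqn0 leqNgt -has_count.
apply/hasPn => e /(path_edge_mem wall_path) [e1w _ _]; have := wall_cols e1w.
rewrite /crosses; case: e e1w => [[a b] [a' b']] /= _.
by apply: contraTN => /andP[/andP[_ ?] _]; lia.
Qed.

Lemma crossings_left (c : cell) : c.1 < xl -> lo <= c.2 <= hi -> odd (crossings c).
Proof.
move=> c_xl c_row; pose g (d : cell) := d.2 <= c.2.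
rewrite /crossings -(@eq_in_count _ (fun e => g e.1 != g e.2)).
  by rewrite odd_count_switch /g; apply/negP => /eqP; lia.
move=> e /(path_edge_mem wall_path) [e1w e2w].
have := wall_cols e1w; have := wall_cols e2w.
rewrite /near /crosses /g; case: e {e1w e2w} => [[a b] [a' b']] /= ? ? ?.
have [aa'|] := eqVneq a a'; last by move=> ?; apply/negbTE; lia.
subst a'.
have -> /= : (c.1 < a) = true by lia.
by apply/idP/idP => [?|/orP[]/andP[/eqP-> /eqP->]]; try apply/orP; lia.
Qed.

Lemma crossings_row (c d : cell) : c.2 = d.2 -> `|c.1 - d.1| <= 1 ->
  c \notin w :: ws -> d \notin w :: ws -> crossings c = crossings d.
Proof.
move=> cd2 cd1 cw dw; apply: eq_in_count => e /(path_edge_mem wall_path) [e1w e2w _].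
have e1c : e.1 != c by apply: contraNneq cw => <-.
have e1d : e.1 != d by apply: contraNneq dw => <-.
have e2c : e.2 != c by apply: contraNneq cw => <-.
have e2d : e.2 != d by apply: contraNneq dw => <-.
move: e1c e1d e2c e2d cd2 cd1; rewrite /crosses.
case: e {e1w e2w} => [[a b] [a' b']]; case: c {cw} => [x y]; case: d {dw} => [x' y'] /=.
by rewrite !xpair_eqE => *; apply/idP/idP => ?; lia.
Qed.

Lemma crossings_column (c : cell) : (c.1, c.2 + 1) \notin w :: ws -> lo <= c.2 -> c.2 + 1 <= hi ->
  odd (crossings c) = odd (crossings (c.1, c.2 + 1)).
Proof.
move=> cw lo_c c_hi; pose g (d : cell) := (d.2 == c.2 + 1) && (c.1 < d.1).
have disj : count (predI (crosses c) (crosses (c.1, c.2 + 1))) (zip (w :: ws) ws) = 0%N.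
  apply/eqP; rewrite -leqn0 leqNgt -has_count; apply/hasPn => -[[a b] [a' b']] _.
  by rewrite /crosses /=; apply/negP => ?; lia.
have union : count (predU (crosses c) (crosses (c.1, c.2 + 1))) (zip (w :: ws) ws) =
             count (fun e => g e.1 != g e.2) (zip (w :: ws) ws).
  apply: eq_in_count => e /(path_edge_mem wall_path) [e1w e2w n].
  have e1c : e.1 != (c.1, c.2 + 1) by apply: contraNneq cw => <-.
  have e2c : e.2 != (c.1, c.2 + 1) by apply: contraNneq cw => <-.
  move: e1c e2c n; rewrite /near /crosses /g /=.
  case: e {e1w e2w} => [[a b] [a' b']]; case: c {cw lo_c c_hi g disj} => [x y] /=.
  by rewrite !xpair_eqE => *; apply/idP/idP => ?; lia.
have := count_predUI (crosses c) (crosses (c.1, c.2 + 1)) (zip (w :: ws) ws).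
rewrite disj addn0 union => /(congr1 odd); rewrite odd_count_switch oddD.
have -> : (g w != g (last w ws)) = false by rewrite /g; apply/negbTE; lia.
by rewrite /crossings; case: (odd _); case: (odd _).
Qed.

Lemma crossings_near (c d : cell) : near c d -> c \notin w :: ws -> d \notin w :: ws ->
  lo <= c.2 <= hi -> lo <= d.2 <= hi -> odd (crossings c) = odd (crossings d).
Proof.
move=> cd cw dw c_row d_row.
have [cd2|cd2] := eqVneq c.2 d.2.
  by rewrite (crossings_row cd2) //; move: cd; rewrite /near; lia.
have [dE|cE] : d = (c.1, c.2 + 1) \/ c = (d.1, d.2 + 1).
  by move: cd cd2; case: c {cw c_row} => x y; case: d {dw d_row} => x' y';
    rewrite /near /= => *; [have [->|] := eqVneq y' (y + 1); [left|right]]; congr pair; lia.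
  by subst d; apply: crossings_column => //=; move: d_row => /=; lia.
by subst c; rewrite -crossings_column //=; move: c_row => /=; lia.
Qed.

Lemma paths_cross (h : cell) hs : path near h hs -> h.1 < xl -> xr < (last h hs).1 ->
  (forall c : cell, c \in h :: hs -> lo <= c.2 <= hi) ->
  exists2 c, c \in h :: hs & c \in w :: ws.
Proof.
move=> hpath h_xl last_xr h_rows.
have [/hasP[c ? ?]|/hasPn off_wall] := boolP (has (mem (w :: ws)) (h :: hs)); first by exists c.
suff : odd (crossings h) = odd (crossings (last h hs)).
  by rewrite (crossings_right last_xr) (crossings_left h_xl) //; apply: h_rows; exact: mem_head.
elim: hs h {h_xl last_xr} hpath h_rows off_wall => [|y hs IH] h //= /andP[hy ypath] h_rows off_wall.
rewrite (crossings_near hy) ?off_wall ?h_rows ?mem_head ?in_cons ?eqxx ?orbT //.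
by apply: IH => // c cin; [apply: h_rows | apply: off_wall]; rewrite in_cons cin orbT.
Qed.

End Crossing.

Lemma path_stays (T : eqType) (e : rel T) (P Q : T -> Prop) h s : path e h s ->
  (forall c, c \in h :: s -> P c \/ Q c) -> (forall c d, e c d -> P c -> Q d -> False) ->
  P h -> forall c, c \in h :: s -> P c.
Proof.
move=> + + sep; elim: s h => [|y s IH] h /=; first by move=> _ _ Ph c; rewrite inE => /eqP ->.
move=> /andP[hy ys] PQ Ph c; rewrite in_cons => /orP[/eqP -> // | cs].
apply: IH cs => // [d ds|]; first by apply: PQ; rewrite in_cons ds orbT.
by case: (PQ y); rewrite ?in_cons ?eqxx ?orbT // => Qy; case: (sep _ _ hy Ph Qy).
Qed.

Lemma near_cadd_VN2 p v : v \in VN2 -> near p (cadd p v).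
Proof. by rewrite /near /cadd !inE; case: v => a b /=; rewrite !xpair_eqE; lia. Qed.

Section Orbits.
Variable U : CA2.
Local Notation it n x := (iter n (@glob U) x).

Lemma iter_change_between (x : config U) p n m : (n <= m)%N -> it m x p != it n x p ->
  exists j, [/\ (n <= j)%N, (j < m)%N & it j.+1 x p != it j x p].
Proof.
elim: m => [|m IH]; first by rewrite leqn0 => /eqP ->; rewrite eqxx.
rewrite leq_eqVlt => /orP[/eqP -> | n_le_m]; first by rewrite eqxx.
have [-> /(IH n_le_m) [j [? ? ?]] | ? _] := eqVneq (it m.+1 x p) (it m x p).
  by exists j; split=> //; apply: ltnW.
by exists m.
Qed.

Lemma freezing_fixpoint T (x : config U) : freezing U -> (0 < T)%N -> it T x = x ->
  glob x = x.
Proof.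
case=> le [le_refl le_anti le_trans glob_le] T_gt0 xT; apply/functional_extensionality => p.
have le_iter k m : (k <= m)%N -> le (it m x p) (it k x p).
  elim: m => [|m IH]; first by rewrite leqn0 => /eqP ->.
  rewrite leq_eqVlt => /orP[/eqP -> // | /IH]; apply: le_trans; exact: glob_le.
by apply: le_anti; rewrite glob_le -{1}xT (le_iter 1%N).
Qed.

Section VonNeumann.
Hypothesis vnU : perm_eq (nb U) VN2.

Lemma glob_neq (x y : config U) p : glob x p != glob y p ->
  exists2 v, v \in VN2 & x (cadd p v) != y (cadd p v).
Proof.
move=> xy; have [/hasP[v ? ?]|/hasPn agree] :=
  boolP (has (fun v => x (cadd p v) != y (cadd p v)) VN2); first by exists v.
case/negP: xy; apply/eqP; rewrite /glob; congr loc; apply/ffunP => i; rewrite !ffunE.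
by apply/eqP/negPn/agree; rewrite -(perm_mem vnU) mem_nth.
Qed.

Lemma influence_path t (x y : config U) p : it t x p != it t y p ->
  exists s, [/\ path near p s, x (last p s) != y (last p s) &
    forall c : cell, c \in p :: s -> `|c.1 - p.1| + `|c.2 - p.2| <= t%:Z /\
      exists2 i, (i <= t)%N & it i x c != it i y c].
Proof.
elim: t p => [|t IH] p xyp.
  by exists [::]; split=> // c; rewrite inE => /eqP ->; rewrite !subrr; split=> //; exists 0%N.
have [v vVN xyv] : exists2 v, v \in VN2 & it t x (cadd p v) != it t y (cadd p v).
  by apply: glob_neq; rewrite -!iterS.
have [s [ps xys cs]] := IH _ xyv.
exists (cadd p v :: s); split=> //=; first by rewrite near_cadd_VN2.
move=> c; rewrite in_cons => /orP[/eqP -> | cin]; first by rewrite !subrr; split=> //; exists t.+1.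
have [dist [i ? ?]] := cs c cin; split; last by exists i => //; apply: leqW.
by move: dist (near_cadd_VN2 p vVN); rewrite /near /cadd /=; lia.
Qed.

Lemma change_path t (x : config U) p : it t.+1 x p != it t x p ->
  exists s, [/\ path near p s, glob x (last p s) != x (last p s) &
    forall c : cell, c \in p :: s -> exists2 i, (i <= t)%N & it i.+1 x c != it i x c].
Proof.
rewrite iterSr => /influence_path[s [ps neq cs]]; exists s; split=> // c /cs[_ [i ? ?]].
by exists i; rewrite // iterSr.
Qed.

End VonNeumann.

Section OneChange.
Hypothesis oneU : k_change 1 U.

Lemma iter_change_unique (x : config U) p i j :
  it i.+1 x p != it i x p -> it j.+1 x p != it j x p -> i = j.
Proof.
move=> chi chj; apply/eqP/negPn/negP => ij.
have := oneU x p (maxn i j).+1.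
have ltij k : (k <= maxn i j)%N -> (k < (maxn i j).+1)%N by [].
rewrite (bigD1 (Ordinal (ltij i (leq_maxl i j)))) //.
rewrite (bigD1 (Ordinal (ltij j (leq_maxr i j)))) /=; last by rewrite -(inj_eq val_inj) /= eq_sym.
by rewrite chi chj.
Qed.

Lemma iter_after_change (x : config U) p i m : it i.+1 x p != it i x p -> (i < m)%N ->
  it m x p = it i.+1 x p.
Proof.
move=> chi im; apply/eqP/negPn/negP => /(iter_change_between im)[j [ij _ chj]].
by move: ij; rewrite (iter_change_unique chi chj) ltnn.
Qed.

Lemma iter_before_change (x : config U) p i m : it i.+1 x p != it i x p -> (m <= i)%N ->
  it m x p = x p.
Proof.
move=> chi mi; apply/eqP/negPn/negP => /(iter_change_between (leq0n m))[j [_ jm chj]].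
by move: jm; rewrite -(iter_change_unique chi chj) ltnNge mi.
Qed.

Lemma iter_changed (x : config U) p i m : it i.+1 x p != it i x p -> (i < m)%N ->
  it m x p != x p.
Proof.
by move=> chi im; rewrite (iter_after_change chi im) -(iter_before_change chi (leqnn i)).
Qed.

Lemma iter_frozen (x : config U) p n m : it n x p != x p -> (n <= m)%N -> it m x p = it n x p.
Proof.
move=> /(iter_change_between (leq0n n))[j [_ jn chj]] nm.
by rewrite (iter_after_change chj jn) (iter_after_change chj (leq_trans jn nm)).
Qed.

End OneChange.
End Orbits.

Lemma globF (c : config F_CA) z : glob c z = fF (c z) (c (cadd z (0, 1))) (c (cadd z (1, 0))).
Proof. by rewrite /glob /= /locF !ffunE /= !inordK // /cadd /= !addr0; case: z. Qed.

(* The orbit of F from the half-line of [QD] on the cells [(0, y)], [y >= y0],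
   together, if [left], with a single [QL] at [(k, 0)]: the down signal reaches
   the origin at time [y0] and the left signal passes it at time [k]. *)
Definition scene (k y0 : int) (left : bool) (t : nat) : config F_CA := fun z =>
  if z.1 == 0 then
    if z.2 == 0 then (if left && (k <= t%:Z) then QLD else if y0 <= t%:Z then QD else Q0)
    else (if y0 - t%:Z <= z.2 then QD else Q0)
  else if (z.2 == 0) && left && (k - t%:Z <= z.1 <= k) then QL else Q0.

Section Scene.
Variables (k y0 : int) (left : bool).

Lemma scene_off_row t z : z.2 != 0 ->
  scene k y0 left t z = if (z.1 == 0) && (y0 - t%:Z <= z.2) then QD else Q0.
Proof. by rewrite /scene => /negbTE ->; case: eqP; rewrite ?andbF. Qed.

Lemma scene_off_column t z : z.1 != 0 ->
  scene k y0 left t z = if (z.2 == 0) && left && (k - t%:Z <= z.1 <= k) then QL else Q0.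
Proof. by rewrite /scene => /negbTE ->. Qed.

Lemma scene_change_support t z : scene k y0 left t z != scene k y0 left 0 z ->
  z.1 = 0 \/ (z.2 = 0 /\ k - t%:Z <= z.1).
Proof.
by rewrite /scene; case: z => x y /=; repeat case: ifP => ?; first [by rewrite eqxx | lia].
Qed.

Lemma scene0_support z : 0 < y0 -> 0 < k -> scene k y0 left 0 z != Q0 ->
  (z.1 = 0 /\ y0 <= z.2) \/ (z.2 = 0 /\ z.1 = k).
Proof.
move=> ? ?; rewrite /scene; case: z => x y /=.
by repeat case: ifP => ?; first [by rewrite eqxx | lia].
Qed.

Hypotheses (k_gt0 : 0 < k) (y0_lt_k : y0 < k).

Lemma glob_scene t : glob (scene k y0 left t) = scene k y0 left t.+1.
Proof.
apply/functional_extensionality => -[x y]; rewrite globF /scene /cadd /=.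
by case: left => /=; repeat case: ifP => ?; by [] || lia.
Qed.

Lemma iter_scene n t : iter n (@glob F_CA) (scene k y0 left t) = scene k y0 left (n + t).
Proof. by elim: n => [|n IH] //; rewrite iterS IH glob_scene. Qed.

End Scene.

Lemma scene_signal_support k y0 t z : scene k y0 true t z != scene k y0 false t z ->
  z.2 = 0 /\ (k - t%:Z <= z.1 \/ k <= t%:Z).
Proof.
by rewrite /scene; case: z => x y /=; repeat case: ifP => ?; first [by rewrite eqxx | lia].
Qed.

Section Blocks.
Variables b1 b2 : nat.
Definition block (z : cell) (r1 : 'I_b1) (r2 : 'I_b2) : cell :=
  (b1%:Z * z.1 + (r1 : nat)%:Z, b2%:Z * z.2 + (r2 : nat)%:Z).

Lemma block_decomp (p : cell) : (0 < b1)%N -> (0 < b2)%N ->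
  exists z (r1 : 'I_b1) (r2 : 'I_b2), p = block z r1 r2.
Proof.
move=> b1_gt0 b2_gt0.
have mod_lt (x : int) b : (0 < b)%N -> (absz (x %% b%:Z)%Z < b)%N.
  by move=> b_gt0; have := @ltz_pmod x b%:Z; have := @modz_ge0 x b%:Z; lia.
exists ((p.1 %/ b1)%Z, (p.2 %/ b2)%Z).
exists (Ordinal (mod_lt p.1 _ b1_gt0)), (Ordinal (mod_lt p.2 _ b2_gt0)).
rewrite /block /=; case: p => x y /=.
have := divz_eq x b1%:Z; have := divz_eq y b2%:Z.
have := @modz_ge0 x b1%:Z; have := @modz_ge0 y b2%:Z; move=> *; congr pair; lia.
Qed.

Lemma block1_lt z r1 r2 m : ((block z r1 r2).1 < b1%:Z * m) = (z.1 < m).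
Proof. by case: r1 => r1 /= r1_lt; apply/idP/idP => ?; nia. Qed.

Lemma block1_ge z r1 r2 m : (b1%:Z * m <= (block z r1 r2).1) = (m <= z.1).
Proof. by case: r1 => r1 /= r1_lt; apply/idP/idP => ?; nia. Qed.

Lemma block2_lt z r1 r2 m : ((block z r1 r2).2 < b2%:Z * m) = (z.2 < m).
Proof. by case: r2 => r2 /= r2_lt; apply/idP/idP => ?; nia. Qed.

Lemma block2_ge z r1 r2 m : (b2%:Z * m <= (block z r1 r2).2) = (m <= z.2).
Proof. by case: r2 => r2 /= r2_lt; apply/idP/idP => ?; nia. Qed.

End Blocks.

Definition radius (C : seq cell) : nat := \max_(v <- C) (`|v.1| + `|v.2|)%N.

Lemma radius_bound (C : seq cell) (v : cell) : v \in C ->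
  `|v.1| <= (radius C)%:Z /\ `|v.2| <= (radius C)%:Z.
Proof.
move=> vC; have := @leq_bigmax_seq _ C predT (fun v : cell => (`|v.1| + `|v.2|)%N) v vC isT.
by rewrite -/(radius C); lia.
Qed.

Definition blank : config F_CA := fun _ => Q0.
Definition down_column : config F_CA := fun z => if z.1 == 0 then QD else Q0.
Definition left_row : config F_CA := fun z => if z.2 == 0 then QL else Q0.

Section Simulation.
Variables (U : CA2) (T b1 b2 : nat) (C : seq cell)
  (phi : {ffun 'I_(size C) -> st F_CA} -> {ffun 'I_b1 * 'I_b2 -> st U})
  (barphi : config F_CA -> config U).
Hypotheses (vnU : perm_eq (nb U) VN2) (frU : freezing U) (oneU : k_change 1 U)
  (T_gt0 : (0 < T)%N) (b1_gt0 : (0 < b1)%N) (b2_gt0 : (0 < b2)%N).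
Hypothesis barphiE : forall (c : config F_CA) (z : cell) (r1 : 'I_b1) (r2 : 'I_b2),
  barphi c ((b1%:Z) * z.1 + (r1 : nat)%:Z, (b2%:Z) * z.2 + (r2 : nat)%:Z)
  = phi [ffun i : 'I_(size C) => c (cadd z (nth (0, 0) C i))] (r1, r2).
Hypothesis barphi_inj : forall c1 c2 : config F_CA,
  (forall x, barphi c1 x = barphi c2 x) -> forall x, c1 x = c2 x.
Hypothesis barphi_glob : forall (c : config F_CA) (x : cell),
  barphi (glob c) x = iter T (@glob U) (barphi c) x.

Local Notation it n x := (iter n (@glob U) x).

Lemma barphi_window (c1 c2 : config F_CA) z z' (r1 : 'I_b1) (r2 : 'I_b2) :
  (forall v, v \in C -> c1 (cadd z v) = c2 (cadd z' v)) ->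
  barphi c1 (block z r1 r2) = barphi c2 (block z' r1 r2).
Proof.
move=> agree; rewrite !barphiE; congr (phi _ _).
by apply/ffunP => i; rewrite !ffunE agree ?mem_nth.
Qed.

Lemma barphi_window_neq (c1 c2 : config F_CA) z (r1 : 'I_b1) (r2 : 'I_b2) :
  barphi c1 (block z r1 r2) != barphi c2 (block z r1 r2) ->
  exists2 v : cell, v \in C & c1 (cadd z v) != c2 (cadd z v).
Proof.
move=> neq; have [/hasP[v ? ?]|/hasPn agree] :=
  boolP (has (fun v => c1 (cadd z v) != c2 (cadd z v)) C); first by exists v.
by case/eqP: neq; apply: barphi_window => v /agree /negPn /eqP.
Qed.

Lemma barphi_separates (c1 c2 : config F_CA) z : c1 z != c2 z ->
  exists p, barphi c1 p != barphi c2 p.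
Proof.
move=> /eqP c12; apply: NNPP => nsep; apply/c12/barphi_inj => p.
by apply/eqP; apply: contra_notT nsep => ?; exists p.
Qed.

Lemma barphi_iter n (c : config F_CA) :
  barphi (iter n (@glob F_CA) c) = it (n * T) (barphi c).
Proof.
elim: n => [|n IH] //; apply/functional_extensionality => p.
by rewrite iterS barphi_glob IH mulSn iterD.
Qed.

Lemma glob_barphi_blank : glob (barphi blank) = barphi blank.
Proof.
apply: freezing_fixpoint frU T_gt0 _; apply/functional_extensionality => p.
by rewrite -barphi_glob; congr barphi; apply/functional_extensionality => z; rewrite globF.
Qed.

(* At time [tw] the down signal has swept column 0 down to row [- 2 * rad - 1 - lag],
   while the left signal is still at column [gap], out of sight of the strip of
   blocks [|z.1| <= rad]; [2 * gap] more steps of F, that is [lag] steps of U,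
   carry it past the strip. *)
Local Notation rad := (radius C).
Local Notation gap := (2 * rad + 2)%N.
Local Notation lag := ((gap + gap) * T)%N.
Local Notation y0 := (2 * rad + 2 + lag)%N.
Local Notation tw := (4 * rad + 3 + 2 * lag)%N.
Local Notation k := (gap + tw)%N.
Local Notation sA := (scene k y0 true).
Local Notation sB := (scene k y0 false).
Local Notation xA := (barphi (sA 0)).
Local Notation xB := (barphi (sB 0)).
Local Notation in_strip p := (b1%:Z * - rad%:Z <= p.1 < b1%:Z * (rad%:Z + 1)).

Let y0_gt0 : 0 < y0%:Z. Proof. lia. Qed.
Let k_gt0 : 0 < k%:Z. Proof. lia. Qed.
Let y0_lt_k : y0%:Z < k%:Z. Proof. lia. Qed.

Lemma iter_xA n : it (n * T) xA = barphi (sA n).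
Proof. by rewrite -barphi_iter iter_scene ?addn0. Qed.

Lemma iter_xB n : it (n * T) xB = barphi (sB n).
Proof. by rewrite -barphi_iter iter_scene ?addn0. Qed.

Lemma in_strip_block z (r1 : 'I_b1) (r2 : 'I_b2) :
  in_strip (block z r1 r2) = (`|z.1| <= rad%:Z).
Proof. by rewrite block1_ge ?block1_lt //; lia. Qed.

Lemma wall_source :
  exists2 p : cell, in_strip p /\ p.2 < b2%:Z * (- rad%:Z - lag%:Z) & it (tw * T) xA p != xA p.
Proof.
have [p] := @barphi_separates down_column blank (0, 0) ltac:(by apply/eqP).
have [[x y] [r1 [r2 ->]]] := block_decomp p b1_gt0 b2_gt0 => sep.
have [v vC] := barphi_window_neq sep; rewrite /down_column /blank /cadd /=.
case: ifP => [/eqP xv _ | _]; last by rewrite eqxx.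
have x_rad : `|x| <= rad%:Z by case: (radius_bound vC); lia.
pose yb : int := - rad%:Z - lag%:Z - 1.
exists (block (x, yb) r1 r2).
  by rewrite in_strip_block block2_lt /=; split=> //; lia.
have -> : it (tw * T) xA (block (x, yb) r1 r2) = barphi down_column (block (x, y) r1 r2).
  rewrite iter_xA; apply: barphi_window => w /radius_bound[w1 w2].
  rewrite scene_off_row /down_column /cadd /=; last by lia.
  by case: eqP => //= _; rewrite ifT //; lia.
have -> : xA (block (x, yb) r1 r2) = barphi blank (block (x, y) r1 r2).
  apply: barphi_window => w /radius_bound[w1 w2].
  by rewrite scene_off_row /blank /cadd /=; [case: ifP => //; lia | lia].
by [].
Qed.

Lemma wall_change_region (p : cell) : it (tw * T) xA p != xA p ->
  in_strip p \/ b1%:Z * (gap%:Z - rad%:Z) <= p.1.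
Proof.
have [z [r1 [r2 ->]]] := block_decomp p b1_gt0 b2_gt0.
rewrite iter_xA in_strip_block block1_ge => /barphi_window_neq[w /radius_bound[w1 w2]].
by move=> /scene_change_support; rewrite /cadd /=; lia.
Qed.

Lemma wall_top (p : cell) : in_strip p -> glob xA p != xA p ->
  b2%:Z * (rad%:Z + 1) + lag%:Z <= p.2.
Proof.
move=> p_strip ch.
have [v vVN neq] : exists2 v : cell, v \in VN2 & xA (cadd p v) != barphi blank (cadd p v).
  have [e|ne] := eqVneq (xA p) (barphi blank p).
    by apply: (glob_neq vnU); rewrite glob_barphi_blank -e.
  by exists (0, 0); rewrite // /cadd /= !addr0 -surjective_pairing.
have pv := near_cadd_VN2 p vVN.
have [z [r1 [r2 zE]]] := block_decomp (cadd p v) b1_gt0 b2_gt0.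
have z1 : - rad%:Z - 1 <= z.1 < rad%:Z + 2.
  rewrite -(block1_ge z r1 r2) -(block1_lt z r1 r2) -zE.
  by move: pv; rewrite /near /cadd /=; lia.
rewrite zE in neq; have [w /radius_bound[w1 w2]] := barphi_window_neq neq.
move=> /(scene0_support y0_gt0 k_gt0); rewrite /cadd /= => -[[_ y0w] | [_ wk]]; last by lia.
have : b2%:Z * (y0%:Z - rad%:Z) <= (cadd p v).2.
  by rewrite zE block2_ge; lia.
have : (lag <= b2 * lag)%N by apply: leq_pmull.
by move: pv; rewrite /near /cadd /=; lia.
Qed.

Lemma wall : exists w ws, [/\ path near w ws, w.2 < b2%:Z * (- rad%:Z - lag%:Z),
  b2%:Z * (rad%:Z + 1) + lag%:Z <= (last w ws).2 &
  forall c : cell, c \in w :: ws -> in_strip c /\ it (tw * T) xA c != xA c].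
Proof.
have [p [p_strip p_low] ch] := wall_source.
have [j [_ j_lt chj]] := iter_change_between (leq0n _) ch.
have [s [ps top chs]] := change_path vnU chj.
have changed (c : cell) : c \in p :: s -> it (tw * T) xA c != xA c.
  by move=> /chs[i i_le chi]; exact: (iter_changed oneU chi (leq_ltn_trans i_le j_lt)).
have strip (c : cell) : c \in p :: s -> in_strip c.
  apply: (path_stays (P := fun c : cell => in_strip c)
    (Q := fun c => b1%:Z * (gap%:Z - rad%:Z) <= c.1) ps) => //.
    by move=> d /changed /wall_change_region.
  by move=> d d' /=; rewrite /near; lia.
exists p, s; split=> //; first by apply: wall_top => //; apply: strip; exact: mem_last.
by move=> c cin; split; [apply: strip | apply: changed].
Qed.

Lemma signal_source : exists2 q : cell,
  q.1 < b1%:Z * - rad%:Z /\ b2%:Z * - rad%:Z <= q.2 < b2%:Z * (rad%:Z + 1) &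
  it lag (it (tw * T) xA) q != it lag (it (tw * T) xB) q.
Proof.
have [p] := @barphi_separates left_row blank (0, 0) ltac:(by apply/eqP).
have [[x y] [r1 [r2 ->]]] := block_decomp p b1_gt0 b2_gt0 => sep.
have [v vC] := barphi_window_neq sep; rewrite /left_row /blank /cadd /=.
case: ifP => [/eqP yv _ | _]; last by rewrite eqxx.
have y_rad : `|y| <= rad%:Z by case: (radius_bound vC); lia.
exists (block (- rad%:Z - 1, y) r1 r2).
  by rewrite block1_lt !block2_ge block2_lt /=; lia.
rewrite -!iterD (_ : (lag + tw * T = (tw + gap + gap) * T)%N); last by lia.
rewrite iter_xA iter_xB.
have -> : barphi (sA (tw + gap + gap)) (block (- rad%:Z - 1, y) r1 r2) =
          barphi left_row (block (x, y) r1 r2).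
  apply: barphi_window => w /radius_bound[w1 w2].
  rewrite scene_off_column /left_row /cadd /=; last by lia.
  by case: eqP => //= _; rewrite ifT //; lia.
have -> : barphi (sB (tw + gap + gap)) (block (- rad%:Z - 1, y) r1 r2) =
          barphi blank (block (x, y) r1 r2).
  apply: barphi_window => w /radius_bound[w1 _].
  by rewrite scene_off_column /blank ?andbF // /cadd /=; lia.
by [].
Qed.

Lemma signal_target (e : cell) : it (tw * T) xA e != it (tw * T) xB e ->
  b1%:Z * (rad%:Z + 1) <= e.1.
Proof.
have [z [r1 [r2 ->]]] := block_decomp e b1_gt0 b2_gt0.
rewrite iter_xA iter_xB block1_ge => /barphi_window_neq[w /radius_bound[w1 _]].
by move=> /scene_signal_support; rewrite /cadd /=; lia.
Qed.

Lemma strip_agree t (c : cell) : (t <= tw)%N -> in_strip c ->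
  it (t * T) xA c = it (t * T) xB c.
Proof.
have [z [r1 [r2 ->]]] := block_decomp c b1_gt0 b2_gt0.
rewrite iter_xA iter_xB in_strip_block => t_tw z_rad.
apply: barphi_window => w /radius_bound[w1 _]; apply/eqP/negPn/negP.
by move=> /scene_signal_support; rewrite /cadd /=; lia.
Qed.

Lemma no_simulation : False.
Proof.
have [w [ws [wpath w_lo w_hi wall_cells]]] := wall.
have [q [q1 q2] diff] := signal_source.
have [s [spath s_end s_cells]] := influence_path vnU diff.
have lag_le : (lag <= b2 * lag)%N by apply: leq_pmull.
have [c cs cw] : exists2 c, c \in q :: s & c \in w :: ws.
  apply: (@paths_cross (b1%:Z * - rad%:Z) (b1%:Z * (rad%:Z + 1) - 1)
    (q.2 - lag%:Z) (q.2 + lag%:Z) w ws) => //; try lia.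
  - by move=> d /wall_cells[d_strip _]; lia.
  - by move: (signal_target s_end); lia.
  - by move=> d /s_cells[dist _]; lia.
have [c_strip chA] := wall_cells c cw.
have agree0 := strip_agree (leq0n tw) c_strip; rewrite mul0n /= in agree0.
have agree_tw := strip_agree (leqnn tw) c_strip.
have chB : it (tw * T) xB c != xB c by rewrite -agree_tw -agree0.
have [_ [i _]] := s_cells c cs.
by rewrite -!iterD (iter_frozen oneU chA) ?(iter_frozen oneU chB) ?leq_addl // agree_tw eqxx.
Qed.

End Simulation.

Lemma not_simulates_F (U : CA2) :
  perm_eq (nb U) VN2 -> freezing U -> k_change 1 U -> ~ simulates U F_CA.
Proof.
move=> vnU frU oneU [T [b1 [b2 [C [phi [barphi [[T_gt0 b1_gt0 b2_gt0 _ _] [barphiE inj com]]]]]]]].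
exact: (no_simulation vnU frU oneU T_gt0 b1_gt0 b2_gt0 barphiE inj com).
Qed.

Lemma VN2_uniq : uniq VN2. Proof. by []. Qed.

(* Positions 0, 3 and 1 of [VN2] are the centre, the north and the east neighbours. *)
Definition F_VN : CA2 :=
  @MkCA2 QF VN2 VN2_uniq (fun v => fF (v (inord 0)) (v (inord 3)) (v (inord 1))).

Lemma glob_F_VN : @glob F_VN = @glob F_CA.
Proof.
apply/functional_extensionality => c; apply/functional_extensionality => z.
by rewrite globF /glob /= !ffunE /= !inordK // /cadd /= !addr0; case: z.
Qed.

(* Every transition of [fF] is [Q0 -> QL], [Q0 -> QD] or [QD -> QLD]. *)
Definition QF_le (a b : QF) : bool :=
  match a, b with
  | _, Q0 | QL, QL | QD, QD | QLD, QLD | QLD, QD => true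
  | _, _ => false
  end.

Lemma F_VN_freezing : freezing F_VN.
Proof.
exists QF_le; split; [by case | by do 2 case | by do 3 case |] => c z.
by rewrite glob_F_VN globF; case: (c z); case: (c _); case: (c _).
Qed.

Lemma simulates_F_VN (U : CA2) : simulates U F_VN -> simulates U F_CA.
Proof.
case=> T [b1 [b2 [C [phi [barphi [hyps [barphiE inj com]]]]]]].
by exists T, b1, b2, C, phi, barphi; split=> //; split=> // c; rewrite -glob_F_VN.
Qed.

Theorem theorem10 :
  (forall U : CA2, perm_eq (nb U) VN2 -> freezing U -> k_change 1 U ->
     ~ simulates U F_CA) /\
  ~ (exists U : CA2, [/\ perm_eq (nb U) VN2, freezing U, k_change 1 U &
       forall G : CA2, perm_eq (nb G) VN2 -> freezing G -> simulates U G]).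
Proof.
split=> [|[U [vnU frU oneU universal]]]; first exact: not_simulates_F.
apply: (not_simulates_F vnU frU oneU); apply: simulates_F_VN.
exact: universal F_VN (perm_refl _) F_VN_freezing.
Qed.
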